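(* Assume $K$ is a perfect $A$-field and let $\phi,\psi$ be Drinfeld modules over $K$ with $\operatorname{rk}\phi<\operatorname{rk}\psi$. Then there is a short exact sequence of $\mathbf t^\sigma$-modules $$0\to\operatorname{Ext}^1_{0,\tau}(\phi,\psi)\to\operatorname{Ext}^1_\tau(\phi,\psi)\to\mathbb G_a\to0,$$ where $\operatorname{Ext}^1_{0,\tau}(\phi,\psi)$ and $\operatorname{Ext}^1_\tau(\phi,\psi)$ carry natural $\mathbf t^\sigma$-module structures (i.e. they are, as $\mathbb F_q[t]$-modules, the Mordell–Weil modules of $\mathbf t^\sigma$-modules, the first map inducing the natural inclusion) and $\mathbb G_a$ is the one-dimensional $\mathbf t^\sigma$-module $t\mapsto\theta$.
   Context: $A=\mathbb F_q[t]$; $K$ a perfect field of characteristic $p$ with $\mathbb F_q$-algebra map $\iota:A\to K$, $\theta=\iota(t)$. $K\{\tau\}$: twisted polynomials with $\tau x=x^q\tau$; $K\{\sigma\}$: twisted polynomials with $\sigma x=x^{q^{-1}}\sigma$. A $\mathbf t$-module (resp. $\mathbf t^\sigma$-module) of dimension $d$ is an $\mathbb F_q$-algebra homomorphism $\Phi:\mathbb F_q[t]\to\mathrm{Mat}_d(K\{\tau\})$ (resp. $\mathrm{Mat}_d(K\{\sigma\})$) with $\Phi_t=(\theta I+N)+\sum_{i\ge1}M_i\tau^i$ (resp. $\sigma^i$), $N$ nilpotent; rank $=$ degree of $\Phi_t$; a Drinfeld module is a one-dimensional $\mathbf t$-module. Mordell–Weil module of a $\mathbf t^\sigma$-module: $K^d$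 with $t$ acting via evaluation of $\Phi_t$, $\sigma$ acting as $x\mapsto x^{q^{-1}}$. Morphisms of $\mathbf t^\sigma$-modules from $\Psi$ (dim $e$) to $\Phi$ (dim $d$): $f\in\mathrm{Mat}_{d\times e}(K\{\sigma\})$ with $f\Psi_t=\Phi_tf$; short exact sequence: composable morphisms whose underlying sequence of algebraic groups is short exact. $\mathrm{Der}(\phi,\psi)$: $\mathbb F_q$-linear $\delta:\mathbb F_q[t]\to K\{\tau\}$ with $\delta(ab)=\psi_a\delta(b)+\delta(a)\phi_b$; inner: $\delta^{(U)}(a)=U\phi_a-\psi_aU$; $\operatorname{Ext}^1_\tau(\phi,\psi)=\mathrm{Der}/\mathrm{Der}_{in}$ with $a*[\delta]=[\psi_a\delta]$; $\mathrm{Der}_0$ = those $\delta$ with $\delta(t)$ of zero constant term, $\operatorname{Ext}^1_{0,\tau}=\mathrm{Der}_0/(\mathrm{Der}_0\cap\mathrm{Der}_{in})$. *)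

From HB Require Import structures.
From mathcomp Require Import all_boot all_order all_algebra.
Set Implicit Arguments. Unset Strict Implicit. Unset Printing Implicit Defensive.
Import GRing.Theory.
Local Open Scope ring_scope.

(* An element  sum_i a_i T^i  of R{T} (T = tau or
   sigma) is stored as its coefficient polynomial a : {poly R} (a`_i = a_i).
   The commutation rule is  T x = fr(x) T  for a ring endomorphism fr
   (fr = x |-> x^q for tau, fr = x |-> x^(1/q) for sigma), so
   (sum a_i T^i)(sum b_j T^j) = sum_k (sum_(i<=k) a_i fr^i(b_(k-i))) T^k.   *)
Section Twisted.
Variable R : nzRingType.

Definition twmul (fr : R -> R) (f g : {poly R}) : {poly R} :=
  \poly_(k < (size f + size g).-1) \sum_(i < k.+1) f`_i * iter i fr (g`_(k - i)).

Definition twpow (fr : R -> R) (f : {poly R}) (n : nat) : {poly R} :=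
  iter n (twmul fr f) 1.

Definition tweval (fr : R -> R) (f : {poly R}) (x : R) : R :=
  \sum_(i < size f) f`_i * iter i fr x.

Definition twmx (fr : R -> R) m n l (F : 'M[{poly R}]_(m, n))
    (G : 'M[{poly R}]_(n, l)) : 'M[{poly R}]_(m, l) :=
  \matrix_(i, k) \sum_(j < n) twmul fr (F i j) (G j k).

Definition twmxeval (fr : R -> R) m n (F : 'M[{poly R}]_(m, n))
    (x : 'cV[R]_n) : 'cV[R]_m :=
  \col_i \sum_(j < n) tweval fr (F i j) (x j 0).
End Twisted.

Section Setting.
Variables (Fq : finFieldType) (K : fieldType) (iota0 : {rmorphism Fq -> K}).
Variable theta : K.        (* theta = iota(t) *)
Variable qroot : K -> K.   (* inverse of the q-Frobenius (K perfect)        *)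

Definition qq : nat := #|Fq|.
Definition frobq (x : K) : K := x ^+ qq.

Definition taumul := twmul frobq.
Definition sigmul := twmul qroot.

(* A t^sigma-module of dimension d is an F_q-algebra map
   Phi : F_q[t] -> Mat_d(K{sigma}); since F_q[t] is free on t it is given by
   Phi_t, subject to Phi_t = (theta I + N) + sum_(i>=1) M_i sigma^i with N
   nilpotent. *)
Definition is_tsigma_module d (Phit : 'M[{poly K}]_d) : Prop :=
  exists n : nat,
    ((\matrix_(i, j) (Phit i j)`_0 - theta%:M : 'M[K]_d) ^+ n) = 0.

Definition is_tsigma_morphism d e (Psit : 'M[{poly K}]_e)
    (Phit : 'M[{poly K}]_d) (f : 'M[{poly K}]_(d, e)) : Prop :=
  twmx qroot f Psit = twmx qroot Phit f.

Definition mw_t d (Phit : 'M[{poly K}]_d) (x : 'cV[K]_d) : 'cV[K]_d :=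
  twmxeval qroot Phit x.

Definition Ga_t : 'M[{poly K}]_1 := const_mx theta%:P.

(* A Drinfeld module phi is a one-dimensional t-module, given by
   phi_t = theta + sum_(i>=1) a_i tau^i  (1x1 nilpotent part is 0);
   its rank is deg phi_t. *)
Definition is_drinfeld (phit : {poly K}) : Prop := phit`_0 = theta.
Definition drank (phit : {poly K}) : nat := (size phit).-1.

Definition dm (phit : {poly K}) (a : {poly Fq}) : {poly K} :=
  \sum_(k < size a) iota0 a`_k *: twpow frobq phit k.

Definition is_der (phit psit : {poly K}) (delta : {poly Fq} -> {poly K}) :=
  [/\ forall a b, delta (a + b) = delta a + delta b,
      forall (c : Fq) a, delta (c *: a) = iota0 c *: delta a &
      forall a b, delta (a * b) =
        taumul (dm psit a) (delta b) + taumul (delta a) (dm phit b)].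

Definition is_inner_der (phit psit : {poly K})
    (delta : {poly Fq} -> {poly K}) : Prop :=
  exists U : {poly K}, forall a,
    delta a = taumul U (dm phit a) - taumul (dm psit a) U.

Definition is_der0 (phit psit : {poly K}) (delta : {poly Fq} -> {poly K}) :=
  is_der phit psit delta /\ (delta 'X)`_0 = 0.

(* Module structure on Ext^1: a * [delta] = [psi_a delta]; on derivations we
   record the actions of t and of c in F_q, which generate F_q[t]. *)
Definition der_tact (psit : {poly K}) (delta : {poly Fq} -> {poly K}) :=
  fun b => taumul psit (delta b).
Definition der_add (d1 d2 : {poly Fq} -> {poly K}) := fun b => d1 b + d2 b.
Definition der_scale (c : Fq) (delta : {poly Fq} -> {poly K}) :=
  fun b => iota0 c *: delta b.

(* [presents P Phit pi] : pi induces an isomorphism of F_q[t]-modules from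
   the quotient  {delta | P delta} / {delta | P delta /\ inner delta}
   onto the Mordell-Weil module of the t^sigma-module Phit: pi is
   F_q[t]-linear on the P-derivations, onto, with kernel the inner ones. *)
Definition presents (phit psit : {poly K}) (P : ({poly Fq} -> {poly K}) -> Prop)
    d (Phit : 'M[{poly K}]_d) (pi : ({poly Fq} -> {poly K}) -> 'cV[K]_d) :=
  [/\ forall d1 d2, P d1 -> P d2 -> pi (der_add d1 d2) = pi d1 + pi d2,
      forall c delta, P delta -> pi (der_scale c delta) = iota0 c *: pi delta,
      forall delta, P delta -> pi (der_tact psit delta) = mw_t Phit (pi delta),
      forall x, exists2 delta, P delta & pi delta = x &
      forall delta, P delta -> (pi delta = 0 <-> is_inner_der phit psit delta)].
End Setting.

(* Short exactness of 0 -> E0 -f-> E -g-> G_a -> 0 as algebraic groups: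
   exactness on points over an algebraically closed field L containing K,
   where sigma acts on L-points as the inverse q-Frobenius qrootL of L. *)
Definition exact_over (K : fieldType) (L : closedFieldType)
    (j : {rmorphism K -> L}) (qrootL : L -> L) d0 d
    (f : 'M[{poly K}]_(d, d0)) (g : 'M[{poly K}]_(1, d)) : Prop :=
  let fL := twmxeval qrootL (map_mx (map_poly j) f) in
  let gL := twmxeval qrootL (map_mx (map_poly j) g) in
  [/\ injective fL,
      forall y : 'cV[L]_1, exists x, gL x = y &
      forall x : 'cV[L]_d, gL x = 0 <-> exists z, fL z = x].

From HB Require Import structures.
From mathcomp Require Import all_boot all_order all_algebra all_fingroup all_solvable all_field.
From mathcomp Require Import zify.
From Stdlib Require Import IndefiniteDescription.
Import GRing.Theory.
Local Open Scope ring_scope.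

Set Implicit Arguments. Unset Strict Implicit. Unset Printing Implicit Defensive.

Lemma subrACA (V : zmodType) (a b c d : V) : a - b - (c - d) = a - c - (b - d).
Proof. by rewrite opprD addrACA -opprD. Qed.

Section IterMorphism.
Variables (R : nzRingType) (fr : {rmorphism R -> R}).

Lemma iter_zmod_morphism n : zmod_morphism (iter n fr).
Proof. by elim: n => [|n IH] x y //=; rewrite IH rmorphB. Qed.

Lemma iter_monoid_morphism n : monoid_morphism (iter n fr).
Proof.
by elim: n => [|n [I1 IM]] //=; split=> [|x y] /=; rewrite ?I1 ?IM ?rmorph1 ?rmorphM.
Qed.

HB.instance Definition _ n :=
  GRing.isZmodMorphism.Build R R (iter n fr) (iter_zmod_morphism n).
HB.instance Definition _ n :=
  GRing.isMonoidMorphism.Build R R (iter n fr) (iter_monoid_morphism n).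
End IterMorphism.

Section TwistedRing.
Variables (R : nzRingType) (fr : {rmorphism R -> R}).
Implicit Types f g h : {poly R}.

Lemma coef_twmul f g k :
  (twmul fr f g)`_k = \sum_(i < k.+1) f`_i * iter i fr g`_(k - i).
Proof.
rewrite coef_poly; case: ltnP => // hk; symmetry; apply: big1 => i _.
case: (ltnP i (size f)) => hi; last by rewrite nth_default // mul0r.
rewrite (nth_default 0 (_ : size g <= k - i)%N) ?rmorph0 ?mulr0 //.
by have := ltn_ord i; lia.
Qed.

Lemma twmulA : associative (twmul fr).
Proof.
move=> f g h; apply/polyP => k; rewrite !coef_twmul.
pose A i j := f`_j * iter j fr g`_(i - j) * iter i fr h`_(k - i).
transitivity (\sum_(j < k.+1) \sum_(i < k.+1 | (j <= i)%N) A i j); last first.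
  rewrite (exchange_big_dep predT) //=; apply: eq_bigr => i _.
  rewrite coef_twmul mulr_suml.
  by rewrite (big_ord_narrow_leq (F := fun j => A i j) (leq_ord i)).
apply: eq_bigr => j _; rewrite coef_twmul rmorph_sum mulr_sumr.
transitivity (\sum_(0 + j <= i < k.+1) A i j); last by rewrite big_geq_mkord.
rewrite big_addn subSn ?leq_ord // big_mkord; apply: eq_bigr => l _.
by rewrite /A addnK rmorphM /= mulrA -iterD addnC subnDA subnAC.
Qed.

Lemma twmul1l : left_id 1 (twmul fr).
Proof.
move=> f; apply/polyP => k; rewrite coef_twmul big_ord_recl coefC /= mul1r subn0.
by rewrite big1 ?addr0 // => i _; rewrite coefC mul0r.
Qed.

Lemma twmul1r : right_id 1 (twmul fr).
Proof.
move=> f; apply/polyP => k; rewrite coef_twmul big_ord_recr /= subnn coefC.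
rewrite rmorph1 mulr1 big1 ?add0r // => i _.
by rewrite coefC subn_eq0 leqNgt ltn_ord rmorph0 mulr0.
Qed.

Lemma twmulDl : left_distributive (twmul fr) +%R.
Proof.
move=> f g h; apply/polyP => k; rewrite coefD !coef_twmul -big_split /=.
by apply: eq_bigr => i _; rewrite coefD mulrDl.
Qed.

Lemma twmulDr : right_distributive (twmul fr) +%R.
Proof.
move=> f g h; apply/polyP => k; rewrite coefD !coef_twmul -big_split /=.
by apply: eq_bigr => i _; rewrite coefD rmorphD mulrDr.
Qed.

Definition twpoly (fr : {rmorphism R -> R}) : Type := {poly R}.
HB.instance Definition _ := GRing.Zmodule.copy (twpoly fr) {poly R}.
HB.instance Definition _ := GRing.Zmodule_isNzRing.Build (twpoly fr)
  twmulA twmul1l twmul1r twmulDl twmulDr (oner_neq0 {poly R}).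

Lemma twmul_polyC (c : R) f : twmul fr c%:P f = c *: f.
Proof.
apply/polyP => k; rewrite coef_twmul big_ord_recl coefC /= subn0 coefZ.
by rewrite big1 ?addr0 // => i _; rewrite coefC mul0r.
Qed.

Lemma coef_twmulC f (c : R) k : (twmul fr f c%:P)`_k = f`_k * iter k fr c.
Proof.
rewrite coef_twmul big_ord_recr /= subnn coefC big1 ?add0r // => i _.
by rewrite coefC subn_eq0 leqNgt ltn_ord rmorph0 mulr0.
Qed.

Lemma coef_twmulXnl (c : R) m g k :
  (twmul fr (c *: 'X^m) g)`_k = if (m <= k)%N then c * iter m fr g`_(k - m) else 0.
Proof.
rewrite coef_twmul; case: leqP => [mk|km]; last first.
  apply: big1 => i _; rewrite coefZ coefXn.
  by rewrite (_ : (i == m :> nat) = false) ?mulr0 ?mul0r //; apply/negbTE; have := ltn_ord i; lia.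
rewrite (bigD1 (Ordinal (mk : m < k.+1)%N)) //= coefZ coefXn eqxx mulr1 big1 ?addr0 //.
by move=> i /eqP neq; rewrite coefZ coefXn (_ : (i == m :> nat) = false) ?mulr0 ?mul0r //;
  apply/negbTE/eqP => eq; apply: neq; apply: val_inj.
Qed.

Lemma coef_twmulXnr f (c : R) m k :
  (twmul fr f (c *: 'X^m))`_k = if (m <= k)%N then f`_(k - m) * iter (k - m) fr c else 0.
Proof.
rewrite coef_twmul; case: leqP => [mk|km]; last first.
  apply: big1 => i _; rewrite coefZ coefXn.
  by rewrite (_ : (k - i == m)%N = false) ?mulr0 ?rmorph0 ?mulr0 //; apply/negbTE; lia.
have hi : (k - m < k.+1)%N by lia.
rewrite (bigD1 (Ordinal hi)) //= coefZ coefXn subKn // eqxx mulr1 big1 ?addr0 //.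
move=> i /eqP neq; rewrite coefZ coefXn (_ : (k - i == m)%N = false) ?mulr0 ?rmorph0 ?mulr0 //.
by apply/negbTE/eqP => eq; apply: neq; apply: val_inj => /=; have := ltn_ord i; lia.
Qed.

Lemma coef_twmul_top f g n m : (size f <= n.+1)%N -> (size g <= m.+1)%N ->
  (twmul fr f g)`_(n + m) = f`_n * iter n fr g`_m.
Proof.
move=> sf sg; rewrite coef_twmul.
have hn : (n < (n + m).+1)%N by rewrite ltnS leq_addr.
rewrite (bigD1 (Ordinal hn)) //= addKn big1 ?addr0 // => i /eqP neq; have {}neq : (i : nat) <> n.
  by move=> eq; apply: neq; apply: val_inj.
case: (ltnP n i) => ni; first by rewrite (nth_default 0 (_ : size f <= i)%N) ?mul0r //; lia.
by rewrite (nth_default 0 (_ : size g <= n + m - i)%N) ?rmorph0 ?mulr0 //; lia.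
Qed.

Lemma size_twmul f g : (size (twmul fr f g) <= (size f + size g).-1)%N.
Proof. exact: size_poly. Qed.
End TwistedRing.

Lemma twmxE (R : nzRingType) (fr : {rmorphism R -> R}) m n l
    (F : 'M[{poly R}]_(m, n)) (G : 'M[{poly R}]_(n, l)) :
  twmx fr F G = (F : 'M[twpoly fr]_(m, n)) *m (G : 'M[twpoly fr]_(n, l)).
Proof. by apply/matrixP => i k; rewrite !mxE. Qed.

Lemma scalar_mx_central (R : pzRingType) n (a : R) (A : 'M[R]_n) :
  (forall x, a * x = x * a) -> A *m a%:M = a%:M *m A.
Proof.
move=> a_central; apply/matrixP => i j; rewrite !mxE [LHS](bigD1 j) // [RHS](bigD1 i) //=.
rewrite !mxE !eqxx !mulr1n a_central !big1 ?addr0 // => k /negbTE nk.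
  by rewrite mxE eq_sym nk mulr0n mul0r.
by rewrite mxE nk mulr0n mulr0.
Qed.

Section TwistedEval.
Variables (R : nzRingType) (fr : R -> R).
Implicit Types (p : {poly R}) (x : R).

Lemma tweval_widen p x n : (size p <= n)%N ->
  tweval fr p x = \sum_(i < n) p`_i * iter i fr x.
Proof.
move=> sp; rewrite /tweval (big_ord_widen n (fun i => p`_i * iter i fr x) sp).
by rewrite big_mkcond; apply: eq_bigr => i _; case: ltnP => // ?; rewrite nth_default ?mul0r.
Qed.

Lemma twevalD p q x : tweval fr (p + q) x = tweval fr p x + tweval fr q x.
Proof.
pose n := maxn (size p) (size q).
rewrite !(@tweval_widen _ _ n) ?leq_maxl ?leq_maxr ?(leq_trans (size_polyD _ _)) //.
by rewrite -big_split; apply: eq_bigr => i _; rewrite coefD mulrDl.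
Qed.

Lemma twevalZ c p x : tweval fr (c *: p) x = c * tweval fr p x.
Proof.
rewrite !(@tweval_widen _ _ (size p)) ?size_scale_leq // mulr_sumr.
by apply: eq_bigr => i _; rewrite coefZ mulrA.
Qed.

Lemma twevalN p x : tweval fr (- p) x = - tweval fr p x.
Proof. by rewrite -scaleN1r twevalZ mulN1r. Qed.

Lemma tweval0 x : tweval fr 0 x = 0.
Proof. by rewrite /tweval size_poly0 big_ord0. Qed.

Lemma tweval1 x : tweval fr 1 x = x.
Proof. by rewrite /tweval size_poly1 big_ord1 coefC mul1r. Qed.

Lemma twevalC c x : tweval fr c%:P x = c * x.
Proof. by rewrite -[c%:P]mulr1 mul_polyC twevalZ tweval1. Qed.

Lemma twmxeval0 m n (x : 'cV_n) : twmxeval fr (0 : 'M_(m, n)) x = 0.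
Proof. by apply/colP => i; rewrite !mxE big1 // => j _; rewrite mxE tweval0. Qed.

Lemma twmxeval1 n (x : 'cV_n) : twmxeval fr 1%:M x = x.
Proof.
apply/colP => i; rewrite mxE (bigD1 i) //= mxE eqxx tweval1 big1 ?addr0 // => j ji.
by rewrite mxE eq_sym (negbTE ji) tweval0.
Qed.

Lemma twmxeval_col_mx m1 m2 n (A : 'M_(m1, n)) (B : 'M_(m2, n)) (x : 'cV_n) :
  twmxeval fr (col_mx A B) x = col_mx (twmxeval fr A x) (twmxeval fr B x).
Proof.
apply/colP => i; case: (split_ordP i) => k ->; rewrite ?col_mxEu ?col_mxEd !mxE.
  by apply: eq_bigr => j _; rewrite col_mxEu.
by apply: eq_bigr => j _; rewrite col_mxEd.
Qed.

Lemma twmxeval_row_mx m n1 n2 (A : 'M_(m, n1)) (B : 'M_(m, n2)) u v :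
  twmxeval fr (row_mx A B) (col_mx u v) = twmxeval fr A u + twmxeval fr B v.
Proof.
apply/colP => i; rewrite !mxE big_split_ord /=.
by congr (_ + _); apply: eq_bigr => j _; rewrite ?row_mxEl ?row_mxEr ?col_mxEu ?col_mxEd.
Qed.

Lemma twmxeval_block_mx m1 m2 n1 n2 (A : 'M_(m1, n1)) (B : 'M_(m1, n2))
    (C : 'M_(m2, n1)) (D : 'M_(m2, n2)) u v :
  twmxeval fr (block_mx A B C D) (col_mx u v) =
  col_mx (twmxeval fr A u + twmxeval fr B v) (twmxeval fr C u + twmxeval fr D v).
Proof. by rewrite block_mxEv twmxeval_col_mx !twmxeval_row_mx. Qed.
End TwistedEval.

Lemma usubmx_twmxeval (R : nzRingType) (fr : R -> R) m1 m2 n1 n2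
    (A : 'M_(m1 + m2, n1 + n2)) y :
  usubmx (twmxeval fr A y) =
  twmxeval fr (ulsubmx A) (usubmx y) + twmxeval fr (ursubmx A) (dsubmx y).
Proof. by rewrite -{1}[A]submxK -{1}[y]vsubmxK twmxeval_block_mx col_mxKu. Qed.

Lemma dsubmx_twmxeval (R : nzRingType) (fr : R -> R) m1 m2 n1 n2
    (A : 'M_(m1 + m2, n1 + n2)) y :
  dsubmx (twmxeval fr A y) =
  twmxeval fr (dlsubmx A) (usubmx y) + twmxeval fr (drsubmx A) (dsubmx y).
Proof. by rewrite -{1}[A]submxK -{1}[y]vsubmxK twmxeval_block_mx col_mxKd. Qed.

Lemma scalar_mx1_eq0 (R : nzRingType) (a : R) : (a%:M : 'M_1) = 0 <-> a = 0.
Proof. by split=> [/matrixP/(_ 0 0)|->]; rewrite ?raddf0 // !mxE mulr1n. Qed.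

Lemma twmxeval0x (R : nzRingType) (fr : {rmorphism R -> R}) m n (A : 'M_(m, n)) :
  twmxeval fr A 0 = 0.
Proof.
apply/colP => i; rewrite !mxE big1 // => j _; rewrite mxE /tweval big1 // => k _.
by rewrite rmorph0 mulr0.
Qed.

Section Frobenius.
Variables (Fq : finFieldType) (K : fieldType) (iota0 : {rmorphism Fq -> K}).

Lemma qq_pchar_nat : [pchar K].-nat (qq Fq).
Proof.
have /is_abelemP[p p_pr /abelem_pgroup] := finField_is_abelem Fq.
rewrite /pgroup cardsT => /p_natP[n qE].
by rewrite /qq qE pnatX pnatE // (fmorph_pchar iota0) (card_finPcharP qE p_pr).
Qed.

Lemma frobq_zmod_morphism : zmod_morphism (@frobq Fq K).
Proof.
move=> x y; rewrite /frobq.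
by have := exprDn_pchar (x - y) y qq_pchar_nat; rewrite subrK => ->; rewrite addrK.
Qed.

Lemma frobq_monoid_morphism : monoid_morphism (@frobq Fq K).
Proof. by split=> [|x y]; rewrite /frobq ?expr1n ?exprMn. Qed.

HB.instance Definition _ :=
  GRing.isZmodMorphism.Build K K (@frobq Fq K) frobq_zmod_morphism.
HB.instance Definition _ :=
  GRing.isMonoidMorphism.Build K K (@frobq Fq K) frobq_monoid_morphism.

Definition frobR : {rmorphism K -> K} := @frobq Fq K.

Lemma iter_frobq_iota n c : iter n frobR (iota0 c) = iota0 c.
Proof.
by elim: n => //= n ->; rewrite /frobR /= /frobq -rmorphXn /qq expf_card.
Qed.
End Frobenius.

Section Derivations.
Variables (Fq : finFieldType) (K : fieldType) (iota0 : {rmorphism Fq -> K}).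
Variables phit psit : {poly K}.
Local Notation tau := (frobR iota0).
Local Notation T := (twpoly tau).

Definition iota_tw (c : Fq) : T := (iota0 c)%:P.

Lemma iota_tw_zmod_morphism : zmod_morphism iota_tw.
Proof. by move=> x y; rewrite /iota_tw rmorphB polyCB. Qed.

Lemma iota_tw_monoid_morphism : monoid_morphism iota_tw.
Proof.
split=> [|x y]; first by rewrite /iota_tw rmorph1.
by rewrite /iota_tw -[RHS]/(twmul tau _ _) twmul_polyC scale_polyC rmorphM.
Qed.

HB.instance Definition _ :=
  GRing.isZmodMorphism.Build Fq T iota_tw iota_tw_zmod_morphism.
HB.instance Definition _ :=
  GRing.isMonoidMorphism.Build Fq T iota_tw iota_tw_monoid_morphism.

Lemma iota_tw_comm (u : T) : commr_rmorph iota_tw u.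
Proof.
move=> c; apply/polyP => k; rewrite -[_ * _]/(twmul tau _ _) -[iota_tw c * _]/(twmul tau _ _).
by rewrite twmul_polyC coefZ coef_twmulC iter_frobq_iota mulrC.
Qed.

Lemma dmE (f : {poly K}) a : dm iota0 f a = horner_morph (iota_tw_comm f) a.
Proof.
rewrite /horner_morph horner_coef size_map_inj_poly ?rmorph0 //; last first.
  by move=> x y /polyC_inj /fmorph_inj.
apply: eq_bigr => i _; rewrite coef_map /=.
rewrite -[_ * _]/(twmul tau _ _) twmul_polyC; congr (_ *: _).
by elim: (val i) => [|n IH]; rewrite ?expr0 // exprS -IH.
Qed.

Lemma dmX (f : {poly K}) : dm iota0 f 'X = f.
Proof. by rewrite dmE horner_morphX. Qed.

Definition der_mx (D : T) : 'M[T]_2 :=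
  \matrix_(i, j) if i == 0 then (if j == 0 then psit : T else D)
                 else (if j == 0 then 0 else phit).

Definition iota_mx (c : Fq) : 'M[T]_2 := (iota_tw c)%:M.

Lemma iota_mx_zmod_morphism : zmod_morphism iota_mx.
Proof. by move=> x y; rewrite /iota_mx rmorphB raddfB. Qed.

Lemma iota_mx_monoid_morphism : monoid_morphism iota_mx.
Proof. by split=> [|x y]; rewrite /iota_mx ?rmorph1 // rmorphM scalar_mxM. Qed.

HB.instance Definition _ :=
  GRing.isZmodMorphism.Build Fq 'M[T]_2 iota_mx iota_mx_zmod_morphism.
HB.instance Definition _ :=
  GRing.isMonoidMorphism.Build Fq 'M[T]_2 iota_mx iota_mx_monoid_morphism.

Lemma iota_mx_comm (A : 'M[T]_2) : commr_rmorph iota_mx A.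
Proof. by move=> c; rewrite /GRing.comm -!mulmxE scalar_mx_central // => x; apply/esym/iota_tw_comm. Qed.

Definition tder (D : T) (a : {poly Fq}) : {poly K} :=
  horner_morph (iota_mx_comm (der_mx D)) a 0 1.

Lemma mx2_mulE (A B : 'M[T]_2) i j : (A * B) i j = A i 0 * B 0 j + A i 1 * B 1 j.
Proof.
rewrite -mulmxE mxE !big_ord_recl big_ord0 addr0.
by rewrite (_ : lift 0 0 = 1 :> 'I_2) //; apply: val_inj.
Qed.

Lemma horner_der_mx D a : let H := horner_morph (iota_mx_comm (der_mx D)) a in
  [/\ H 0 0 = dm iota0 psit a, H 1 0 = 0 & H 1 1 = dm iota0 phit a].
Proof.
rewrite /= !dmE; elim/poly_ind: a => [|p c [H00 H10 H11]].
  by rewrite !rmorph0; split; rewrite mxE.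
rewrite !rmorphD !rmorphM /= !horner_morphX !horner_morphC.
by split; rewrite mxE mx2_mulE ?H00 ?H10 ?H11 !mxE /= ?mulr0 ?mul0r ?addr0 ?add0r ?mulr1n.
Qed.

Lemma tder_is_der D : is_der iota0 phit psit (tder D).
Proof.
have [_ _ _] := horner_der_mx D 0.
split=> [a b|c a|a b]; rewrite /tder.
- by rewrite rmorphD mxE.
- rewrite linearZ /= -mulmxE /iota_mx mul_scalar_mx mxE.
  by rewrite -[_ * _]/(twmul tau _ _) twmul_polyC.
- by rewrite rmorphM mx2_mulE; case: (horner_der_mx D a) => -> _ _; case: (horner_der_mx D b) => _ _ ->.
Qed.

Lemma tderX D : tder D 'X = D.
Proof. by rewrite /tder horner_morphX mxE. Qed.

Lemma der_eq d1 d2 : is_der iota0 phit psit d1 -> is_der iota0 phit psit d2 ->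
  d1 'X = d2 'X -> d1 =1 d2.
Proof.
have derC d c : is_der iota0 phit psit d -> d c%:P = 0.
  move=> [_ dZ dM]; have d1_0 : d 1 = 0.
    have := dM 1 1; rewrite [1 * 1]mulr1 !dmE !rmorph1.
    rewrite -![taumul _ _ _]/(_ * _ : T) mul1r mulr1 => /eqP.
    by rewrite -subr_eq0 opprD addrA subrr sub0r oppr_eq0 => /eqP.
  by rewrite -[c%:P]mulr1 mul_polyC dZ d1_0 scaler0.
move=> der1 der2 eqX; elim/poly_ind => [|p c IH]; first by rewrite -[0]/(0%:P) !derC.
case: (der1) (der2) => [dD1 _ dM1] [dD2 _ dM2].
by rewrite dD1 dD2 dM1 dM2 IH eqX !derC.
Qed.

Definition inner_der (U : T) (a : {poly Fq}) : {poly K} :=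
  U * (dm iota0 phit a : T) - (dm iota0 psit a : T) * U.

Lemma inner_der_is_der U : is_der iota0 phit psit (inner_der U).
Proof.
split=> [a b|c a|a b]; rewrite /inner_der !dmE.
- by rewrite !rmorphD mulrDr mulrDl opprD addrACA.
- rewrite !linearZ /= -(twmul_polyC tau) -[twmul _ _ _]/(iota_tw c * _ : T).
  by rewrite mulrBr !mulrA (iota_tw_comm U c).
- rewrite -![taumul _ _ _]/(_ * _ : T) !rmorphM.
  by rewrite mulrBr mulrBl !mulrA [RHS]addrC addrA subrK.
Qed.

Lemma is_inner_derE delta : is_der iota0 phit psit delta ->
  is_inner_der iota0 phit psit delta <->
  exists U : T, delta 'X = U * (phit : T) - (psit : T) * U.
Proof.
move=> der_delta; split=> [[U dU]|[U dU]]; exists U; first by rewrite dU !dmX.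
by apply: der_eq => //; [exact: inner_der_is_der | rewrite /inner_der !dmX].
Qed.
End Derivations.

Section NormalForm.
Variables (Fq : finFieldType) (K : fieldType) (iota0 : {rmorphism Fq -> K}).
Variable qroot : K -> K.
Hypotheses (qrootK : cancel qroot (@frobq Fq K)) (frobqK : cancel (@frobq Fq K) qroot).
Variables (theta : K) (phit psit : {poly K}).
Hypothesis rank_lt : (drank phit < drank psit)%N.

Local Notation tau := (frobR iota0).
Local Notation T := (twpoly tau).
Local Notation s := (drank psit).
Local Notation b := psit`_s.
Implicit Types (D N U : T) (P Q : {poly {poly K}}).


Lemma qroot_zmod_morphism : zmod_morphism qroot.
Proof.
move=> x y; apply: (can_inj frobqK).
by rewrite -[RHS]/(tau _) rmorphB /= !qrootK.
Qed.

Lemma qroot_monoid_morphism : monoid_morphism qroot.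
Proof.
split=> [|x y]; first by rewrite -[in LHS](rmorph1 tau) frobqK.
by apply: (can_inj frobqK); rewrite -[RHS]/(tau _) rmorphM /= !qrootK.
Qed.

HB.instance Definition _ := GRing.isZmodMorphism.Build K K qroot qroot_zmod_morphism.
HB.instance Definition _ := GRing.isMonoidMorphism.Build K K qroot qroot_monoid_morphism.
Definition qR : {rmorphism K -> K} := qroot.

Lemma iter_frobqK n : cancel (iter n qroot) (iter n tau).
Proof. by elim: n => // n IH x; rewrite iterSr iterS [tau _]qrootK IH. Qed.

Lemma iter_qrootK n : cancel (iter n tau) (iter n qroot).
Proof. by elim: n => // n IH x; rewrite iterSr iterS [qroot _]frobqK IH. Qed.

Lemma iter_frobq_qroot k m x : (m <= k)%N ->
  iter k tau (iter (k - m) qroot x) = iter m tau x.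
Proof. by move=> mk; rewrite -{1}(subnKC mk) iterD iter_frobqK. Qed.

Lemma iter_qroot_iota k c : iter k qroot (iota0 c) = iota0 c.
Proof. by rewrite -{1}(iter_frobq_iota iota0 k c) iter_qrootK. Qed.

Lemma size_phi : (size (phit : T) <= s)%N.
Proof. by have : (size phit <= s)%N by move: rank_lt; rewrite /drank; lia. Qed.

Lemma size_psi : size (psit : T) = s.+1.
Proof. by have : size psit = s.+1 by move: rank_lt; rewrite /drank; lia. Qed.

Lemma lead_psi_neq0 : b != 0.
Proof.
have : psit != 0 by rewrite -size_poly_gt0 size_psi.
by rewrite -lead_coef_eq0 lead_coefE size_psi.
Qed.

Definition cobound_map (U : T) : T := U * (phit : T) - (psit : T) * U.

Lemma cobound_map_zmod_morphism : zmod_morphism cobound_map.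
Proof. by move=> U V; rewrite /cobound_map mulrBl mulrBr subrACA. Qed.

HB.instance Definition _ :=
  GRing.isZmodMorphism.Build T T cobound_map cobound_map_zmod_morphism.

Definition cobound (N : T) : Prop := exists U, N = cobound_map U.

Lemma cobound0 : cobound 0.
Proof. by exists 0; rewrite raddf0. Qed.

Lemma coboundB N1 N2 : cobound N1 -> cobound N2 -> cobound (N1 - N2).
Proof. by move=> [U1 ->] [U2 ->]; exists (U1 - U2); rewrite [RHS]raddfB. Qed.

Lemma coboundD N1 N2 : cobound N1 -> cobound N2 -> cobound (N1 + N2).
Proof.
move=> c1 c2; rewrite -[N2]opprK; apply: coboundB => //.
by rewrite -sub0r; apply: coboundB => //; exact: cobound0.
Qed.

Lemma cobound_psiM N : cobound N -> cobound ((psit : T) * N).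
Proof. by move=> [U ->]; exists ((psit : T) * U); rewrite /cobound_map mulrBr !mulrA. Qed.

Lemma coboundZ c N : cobound N -> cobound (iota0 c *: N).
Proof.
move=> [U ->]; exists (iota0 c *: U); rewrite -!(twmul_polyC tau).
rewrite -![twmul _ _ _]/(iota_tw iota0 c * _ : T) /cobound_map mulrBr !mulrA.
by rewrite (iota_tw_comm psit c).
Qed.

Lemma cobound_small N : cobound N -> (size N <= s)%N -> N = 0.
Proof.
move=> [U ->{N}] small; have [->|U_neq0] := eqVneq U 0; first by rewrite raddf0.
have sizeU : size U = (size U).-1.+1 by rewrite prednK // size_poly_gt0.
have : (cobound_map U)`_(s + (size U).-1) = 0 by rewrite nth_default // (leq_trans small) ?leq_addr.
rewrite coefB (nth_default 0 (_ : size (twmul tau U phit) <= _)%N); last first.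
  by apply: (leq_trans (size_twmul _ _ _)); move: size_phi sizeU; lia.
rewrite [(_ * U : T)`__]coef_twmul_top ?size_psi -?sizeU // sub0r => /eqP.
rewrite oppr_eq0 mulf_eq0 fmorph_eq0 (negbTE lead_psi_neq0) /= -lead_coefE.
by rewrite lead_coef_eq0 (negbTE U_neq0).
Qed.

Lemma nf_ex (D : T) : exists N : T, (size N <= s)%N /\ cobound (D - N).
Proof.
elim: {D}(size D) {-2}D (leqnn (size D)) => [|n IH] D sizeD.
  by exists D; split; [lia | rewrite subrr; exact: cobound0].
have [small|big] := leqP (size D) s; first by exists D; rewrite subrr; split=> //; exact: cobound0.
have sn : (s <= n)%N by move: big sizeD; lia.
pose U : T := iter s qroot (D`_n / b) *: 'X^(n - s).
have sizeU : (size U <= (n - s).+1)%N by rewrite (leq_trans (size_scale_leq _ _)) ?size_polyXn.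
have [N [sizeN cobN]] : exists N : T, (size N <= s)%N /\ cobound (D + cobound_map U - N).
  apply: IH; apply/leq_sizeP => k nk; rewrite coefD coefB.
  rewrite (nth_default 0 (_ : size (twmul tau U phit) <= k)%N) ?sub0r; last first.
    by apply: (leq_trans (size_twmul _ _ _)); move: size_phi sizeU; lia.
  have [nk'|kn] := ltnP n k.
    rewrite !nth_default ?subrr //; last exact: (leq_trans sizeD).
    by apply: (leq_trans (size_twmul _ _ _)); rewrite size_psi; move: sizeU nk'; lia.
  have -> : k = n by apply/eqP; rewrite eqn_leq kn nk.
  rewrite -{2}(subnKC sn) -[(_ * U : T)]/(twmul tau psit U).
  rewrite coef_twmul_top ?size_psi ?(leq_trans (size_scale_leq _ _)) ?size_polyXn //.
  by rewrite coefZ coefXn eqxx mulr1 iter_frobqK mulrC divfK ?lead_psi_neq0 // subrr.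
exists N; split=> //.
have -> : D - N = D + cobound_map U - N - cobound_map U by rewrite addrAC addrK.
by apply: coboundB => //; exists U.
Qed.

Definition nf (D : T) : T := proj1_sig (constructive_indefinite_description _ (nf_ex D)).

Lemma nfP D : (size (nf D) <= s)%N /\ cobound (D - nf D).
Proof. exact: proj2_sig (constructive_indefinite_description _ (nf_ex D)). Qed.

Lemma nf_eq D N : (size N <= s)%N -> cobound (D - N) -> nf D = N.
Proof.
move=> sizeN cobN; have [size_nf cob_nf] := nfP D; apply/eqP; rewrite -subr_eq0; apply/eqP.
apply: cobound_small.
  have -> : nf D - N = D - N - (D - nf D) by rewrite opprB [RHS]addrC addrA subrK.
  exact: coboundB.
by rewrite (leq_trans (size_polyD _ _)) // size_polyN geq_max size_nf.
Qed.

Lemma nf_small D : (size D <= s)%N -> nf D = D.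
Proof. by move=> small; apply: nf_eq; rewrite // subrr; exact: cobound0. Qed.

Lemma nf_cobound D1 D2 : cobound (D1 - D2) -> nf D1 = nf D2.
Proof.
have [size_nf cob_nf] := nfP D2; move=> cob12; apply: nf_eq => //.
by rewrite -(subrK D2 D1) -addrA; apply: coboundD.
Qed.

Lemma nf_zmod_morphism : zmod_morphism nf.
Proof.
move=> D1 D2; have [size1 cob1] := nfP D1; have [size2 cob2] := nfP D2.
apply: nf_eq; last by rewrite subrACA; apply: coboundB.
by rewrite (leq_trans (size_polyD _ _)) // size_polyN geq_max size1.
Qed.

HB.instance Definition _ := GRing.isZmodMorphism.Build T T nf nf_zmod_morphism.

Lemma nfZ c D : nf (iota0 c *: D) = iota0 c *: nf D.
Proof.
have [size_nf cob_nf] := nfP D; apply: nf_eq; last by rewrite -scalerBr; apply: coboundZ.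
exact: leq_trans (size_scale_leq _ _) size_nf.
Qed.

Lemma nf_eq0 D : nf D = 0 <-> cobound D.
Proof.
split=> [nfD0|cobD]; last by apply: nf_eq; rewrite ?size_poly0 ?subr0.
by have [_] := nfP D; rewrite nfD0 subr0.
Qed.

Definition shift_sigma j (p : {poly K}) : {poly K} := 'X^j * map_poly (iter j qroot) p.

Lemma tweval_shift_sigma j p x :
  tweval qroot (shift_sigma j p) x = iter j qroot (tweval qroot p x).
Proof.
rewrite (@tweval_widen _ _ _ _ (j + size p)); last first.
  by rewrite (leq_trans (size_polyMleq _ _)) // size_polyXn leq_add2l size_poly.
rewrite big_split_ord /= big1 ?add0r => [|i _]; last by rewrite coefXnM ltn_ord mul0r.
rewrite /tweval -[iter j qroot]/(iter j qR) rmorph_sum; apply: eq_bigr => i _.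
by rewrite coefXnM ltnNge leq_addr /= addKn coef_map_id0 ?rmorph0 // rmorphM /= iterD.
Qed.

Lemma coef0_shift_sigma j p : (shift_sigma j p)`_0 = if j == 0%N then p`_0 else 0.
Proof. by case: j => [|j]; rewrite /shift_sigma coefXnM //= coef_map_id0. Qed.

Definition peval (P : {poly {poly K}}) (c : K) : T :=
  \poly_(k < size P) iter k tau (tweval qroot P`_k c).

Lemma coef_peval P c k : (peval P c)`_k = iter k tau (tweval qroot P`_k c).
Proof.
rewrite coef_poly; case: ltnP => // sizeP.
by rewrite nth_default // tweval0 rmorph0.
Qed.

Lemma tweval_peval P c k : tweval qroot P`_k c = iter k qroot (peval P c)`_k.
Proof. by rewrite coef_peval iter_qrootK. Qed.

Lemma pevalB P Q c : peval (P - Q) c = peval P c - peval Q c.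
Proof. by apply/polyP => k; rewrite coefB !coef_peval coefB twevalD twevalN rmorphB. Qed.

Lemma size_peval P c : (size (peval P c) <= size P)%N.
Proof. exact: size_poly. Qed.

Definition pmono_mul m (w h : {poly K}) : {poly {poly K}} :=
  'X^m * \poly_(i < size h) shift_sigma i (h`_i *: w).

Definition pmul_mono (h : {poly K}) m (w : {poly K}) : {poly {poly K}} :=
  'X^m * \poly_(i < size h) (iter (i + m) qroot h`_i *: w).

Lemma coef_pmono_mul m w h k :
  (pmono_mul m w h)`_k = if (k < m)%N then 0 else shift_sigma (k - m) (h`_(k - m) *: w).
Proof.
rewrite coefXnM coef_poly; case: (k < m)%N => //; case: ltnP => // sizeh.
by rewrite nth_default // scale0r /shift_sigma map_poly0 mulr0.
Qed.

Lemma coef_pmul_mono h m w k :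
  (pmul_mono h m w)`_k = if (k < m)%N then 0 else iter k qroot h`_(k - m) *: w.
Proof.
rewrite coefXnM coef_poly; case: ltnP => //= mk; rewrite subnK //.
by case: ltnP => // sizeh; rewrite nth_default // rmorph0 scale0r.
Qed.

Lemma peval_pmono_mul m w h c :
  peval (pmono_mul m w h) c = (iter m tau (tweval qroot w c) *: 'X^m : T) * (h : T).
Proof.
apply/polyP => k; rewrite coef_peval coef_pmono_mul -[(_ * _ : T)]/(twmul tau _ _).
rewrite coef_twmulXnl; case: ltnP => mk; first by rewrite tweval0 rmorph0.
by rewrite tweval_shift_sigma twevalZ iter_frobq_qroot // rmorphM mulrC.
Qed.

Lemma peval_pmul_mono h m w c :
  peval (pmul_mono h m w) c = (h : T) * (iter m tau (tweval qroot w c) *: 'X^m : T).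
Proof.
apply/polyP => k; rewrite coef_peval coef_pmul_mono -[(_ * _ : T)]/(twmul tau _ _).
rewrite coef_twmulXnr; case: ltnP => mk; first by rewrite tweval0 rmorph0.
by rewrite twevalZ rmorphM /= iter_frobqK -iterD subnK.
Qed.

Lemma pevalD P Q c : peval (P + Q) c = peval P c + peval Q c.
Proof. by apply/polyP => k; rewrite coefD !coef_peval coefD twevalD rmorphD. Qed.

Lemma shift_sigma0 j : shift_sigma j 0 = 0.
Proof. by rewrite /shift_sigma map_poly0 mulr0. Qed.

Lemma reduce_top P : (s < size P)%N -> (forall k, (s <= k)%N -> (P`_k)`_0 = 0) ->
  exists P', [/\ (size P' < size P)%N, forall c, cobound (peval P' c - peval P c)
               & forall k, (P'`_k)`_0 = (P`_k)`_0].
Proof.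
move=> sP cst0; have := sP; rewrite (polySpred (_ : P != 0)) -?size_poly_gt0 ?(leq_trans _ sP) //.
rewrite ltnS; set n := (size P).-1 => sn; set m := (n - s)%N.
have sizeP : size P = n.+1 by rewrite prednK // (leq_ltn_trans _ sP).
pose w : {poly K} := (iter n qroot b)^-1 *: P`_n.
have w0 : w`_0 = 0 by rewrite coefZ cst0 ?mulr0.
exists (P + pmono_mul m w phit - pmul_mono psit m w); split.
- rewrite ltnS; apply/leq_sizeP => k nk.
  have [mk skm] : (m <= k)%N /\ (s <= k - m)%N by rewrite /m; split; lia.
  rewrite coefB coefD coef_pmono_mul coef_pmul_mono ltnNge mk /=.
  rewrite (nth_default 0 (leq_trans size_phi skm)) scale0r shift_sigma0 addr0.
  have [kn|nk'] := leqP k n.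
    have -> : k = n by apply/eqP; rewrite eqn_leq kn nk.
    rewrite /m subKn // /w scalerA mulfV ?scale1r ?subrr //.
    by rewrite -[iter n qroot]/(iter n qR) fmorph_eq0 lead_psi_neq0.
  rewrite !nth_default ?rmorph0 ?scale0r ?subrr //; last by rewrite sizeP.
  by apply: leq_trans (eq_leq size_psi) _; move: nk'; rewrite /m; lia.
- move=> c; rewrite -addrA [P + _]addrC pevalD addrK pevalB.
  by rewrite peval_pmono_mul peval_pmul_mono; eexists.
- move=> k; rewrite !coefB !coefD coef_pmono_mul coef_pmul_mono.
  rewrite !(fun_if (fun p : {poly K} => p`_0)) coef0 coef0_shift_sigma !(coefZ _ w) w0 !mulr0.
  by rewrite !if_same subr0 addr0.
Qed.

Lemma reduce P : (forall k, (s <= k)%N -> (P`_k)`_0 = 0) ->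
  exists2 P', forall c, nf (peval P c) = peval P' c & forall k, (P'`_k)`_0 = (P`_k)`_0.
Proof.
elim: {P}(size P) {-2}P (leqnn (size P)) => [|n IH] P sizeP cst0.
  by exists P => // c; apply: nf_small; rewrite (leq_trans (size_peval P c)) ?(leq_trans sizeP).
have [small|big] := leqP (size P) s.
  by exists P => // c; apply: nf_small; exact: leq_trans (size_peval P c) small.
have [P' [sizeP' cobP' cstP']] := reduce_top big cst0.
have [||P'' evalP'' cstP''] := IH P'; first by rewrite -ltnS (leq_trans sizeP').
  by move=> k sk; rewrite cstP' cst0.
by exists P'' => [c|k]; rewrite -?evalP'' ?(nf_cobound (cobP' c)) ?cstP'' ?cstP'.
Qed.

Local Notation d := (1 + s.-1)%N.

Lemma rank_psi_eq : s = d.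
Proof. by move: rank_lt; lia. Qed.

Definition tcoord D : 'cV[K]_d := \col_k iter k qroot D`_k.

Definition tpoly (y : 'cV[K]_d) : T := \sum_(j < d) iter j tau (y j 0) *: 'X^j.

Lemma coef_tpoly y k : (tpoly y)`_k = if (k < d)%N then iter k tau (y (inord k) 0) else 0.
Proof.
rewrite coef_sum (eq_bigr (fun j : 'I_d => iter j tau (y j 0) *+ (k == j))); last first.
  by move=> j _; rewrite coefZ coefXn mulr_natr.
case: ltnP => [kd|dk]; last first.
  by apply: big1 => j _; rewrite gtn_eqF ?mulr0n // (leq_trans (ltn_ord j)).
rewrite (bigD1 (Ordinal kd)) //= eqxx mulr1n big1 ?addr0; last first.
  by move=> j neq; rewrite -[k]/(val (Ordinal kd)) val_eqE eq_sym (negbTE neq) mulr0n.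
by congr (iter k tau (y _ 0)); apply: val_inj; rewrite /= inordK.
Qed.

Lemma size_tpoly y : (size (tpoly y) <= s)%N.
Proof.
apply/leq_sizeP => k sk; have dk : (d <= k)%N by rewrite -rank_psi_eq.
by rewrite coef_tpoly ltnNge dk.
Qed.

Lemma tpolyK : cancel tpoly tcoord.
Proof.
by move=> y; apply/colP => k; rewrite mxE coef_tpoly ltn_ord iter_qrootK inord_val.
Qed.

Lemma tcoordK D : (size D <= s)%N -> tpoly (tcoord D) = D.
Proof.
move=> sizeD; apply/polyP => k; rewrite coef_tpoly; case: ltnP => kd.
  by rewrite mxE inordK // iter_frobqK.
by rewrite nth_default // (leq_trans sizeD) // rank_psi_eq.
Qed.

Lemma tcoord_zmod_morphism : zmod_morphism tcoord.
Proof. by move=> D1 D2; apply/colP => k; rewrite !mxE coefB rmorphB /=. Qed.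

HB.instance Definition _ :=
  GRing.isZmodMorphism.Build T 'cV[K]_d tcoord tcoord_zmod_morphism.

Lemma tcoordZ c D : tcoord (iota0 c *: D) = iota0 c *: tcoord D.
Proof. by apply/colP => k; rewrite !mxE coefZ rmorphM /= iter_qroot_iota. Qed.

Section Drinfeld.
Hypotheses (phi_drinfeld : is_drinfeld theta phit) (psi_drinfeld : is_drinfeld theta psit).

Lemma cobound_coef0 N : cobound N -> N`_0 = 0.
Proof.
move=> [U ->]; rewrite coefB -![(_ * _ : T)]/(twmul tau _ _) !coef_twmul !big_ord1 /=.
by rewrite phi_drinfeld psi_drinfeld mulrC subrr.
Qed.

Lemma nf_coef0 D : (nf D)`_0 = D`_0.
Proof. by have [_ /cobound_coef0] := nfP D; rewrite coefB => /eqP; rewrite subr_eq0 => /eqP. Qed.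


Lemma action_mx_ex : exists2 Phi1 : 'M[{poly K}]_d,
    forall y, twmxeval qroot Phi1 y = tcoord (nf (tpoly y * (phit : T)))
  & \matrix_(i, j) (Phi1 i j)`_0 = theta%:M.
Proof.
have cstP (j : 'I_d) k : ((pmono_mul j 1 phit)`_k)`_0 = theta *+ (k == j).
  rewrite coef_pmono_mul; case: ltnP => jk; first by rewrite coef0 ltn_eqF.
  rewrite coef0_shift_sigma coefZ coef1 mulr1 subn_eq0 eqn_leq jk andbT.
  case: ifP => kj; last by rewrite mulr0n.
  by rewrite mulr1n (_ : k - j = 0)%N ?phi_drinfeld //; apply/eqP; rewrite subn_eq0.
have reducedP (j : 'I_d) : exists2 P', forall c, nf (peval (pmono_mul j 1 phit) c) = peval P' c
                                    & forall k, (P'`_k)`_0 = theta *+ (k == j).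
  have [k sk|P' evalP' cstP'] := reduce (P := pmono_mul j 1 phit); last first.
    by exists P' => // k; rewrite cstP' cstP.
  have jk : (j < k)%N by rewrite (leq_trans (ltn_ord j)) // -rank_psi_eq.
  by rewrite cstP gtn_eqF.
have [Q evalQ cstQ] := fin_all_exists2 reducedP.
exists (\matrix_(k, j) (Q j)`_k).
  move=> y; apply/colP => k; rewrite !mxE /tpoly mulr_suml raddf_sum coef_sum rmorph_sum /=.
  by apply: eq_bigr => j _; rewrite !mxE tweval_peval -evalQ peval_pmono_mul tweval1.
by apply/matrixP => i j; rewrite !mxE cstQ.
Qed.

Lemma coef0_psiM D : ((psit : T) * D)`_0 = theta * D`_0.
Proof. by rewrite -[(_ * _ : T)]/(twmul tau _ _) coef_twmul big_ord1 psi_drinfeld. Qed.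

Lemma usubmx_tcoord D : usubmx (tcoord D) = (D`_0)%:M.
Proof. by apply/matrixP => i j; rewrite !mxE !ord1 /= mulr1n. Qed.

Lemma nf_psiM D : nf ((psit : T) * D) = nf (tpoly (tcoord (nf D)) * (phit : T)).
Proof.
have [size_nf cob_nf] := nfP D; rewrite tcoordK //; apply: nf_cobound.
have -> : (psit : T) * D - nf D * phit = (psit : T) * (D - nf D) - cobound_map (nf D).
  by rewrite /cobound_map mulrBr opprB addrA subrK.
by apply: coboundB; [exact: cobound_psiM | exists (nf D)].
Qed.

Section Construction.
Variable Phi1 : 'M[{poly K}]_d.
Hypothesis Phi1_eval : forall y, twmxeval qroot Phi1 y = tcoord (nf (tpoly y * (phit : T))).
Hypothesis Phi1_const : \matrix_(i, j) (Phi1 i j)`_0 = theta%:M.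

Definition ext_mx : 'M[{poly K}]_d := block_mx (Ga_t theta) 0 (dlsubmx Phi1) (drsubmx Phi1).
Definition ext0_mx : 'M[{poly K}]_(s.-1) := drsubmx Phi1.
Definition ext_incl_mx : 'M[{poly K}]_(d, s.-1) := col_mx 0 1%:M.
Definition ext_proj_mx : 'M[{poly K}]_(1, d) := row_mx 1%:M 0.

Definition ext_coord (delta : {poly Fq} -> {poly K}) : 'cV[K]_d := tcoord (nf (delta 'X)).
Definition ext0_coord delta : 'cV[K]_(s.-1) := dsubmx (ext_coord delta).

Lemma const_mxE m n (A : 'M[{poly K}]_(m, n)) :
  \matrix_(i, j) (A i j)`_0 = map_mx (coefp 0) A.
Proof. by apply/matrixP => i j; rewrite !mxE. Qed.

Lemma ext_mx_const : \matrix_(i, j) (ext_mx i j)`_0 = theta%:M.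
Proof.
rewrite const_mxE map_block_mx map_mx0 map_dlsubmx map_drsubmx -(const_mxE Phi1) Phi1_const.
rewrite (scalar_mx_block 1 s.-1 theta) block_mxKdl block_mxKdr.
by congr block_mx; apply/matrixP => i j; rewrite !mxE !ord1 /coefp coefC mulr1n.
Qed.

Lemma ext_mx_tsigma : is_tsigma_module theta ext_mx.
Proof. by exists 1%N; rewrite expr1 ext_mx_const subrr. Qed.

Lemma ext0_mx_tsigma : is_tsigma_module theta ext0_mx.
Proof.
exists 1%N; rewrite expr1 const_mxE map_drsubmx -(const_mxE Phi1) Phi1_const.
by rewrite (scalar_mx_block 1 s.-1 theta) block_mxKdr subrr.
Qed.

Lemma ext_incl_mx_morphism : is_tsigma_morphism qroot ext0_mx ext_mx ext_incl_mx.
Proof.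
rewrite /is_tsigma_morphism -[twmx qroot]/(twmx qR) !twmxE mul_col_mx mul_block_col.
by rewrite !mul0mx !mulmx0 mul1mx mulmx1 !add0r.
Qed.

Lemma ext_proj_mx_morphism : is_tsigma_morphism qroot ext_mx (Ga_t theta) ext_proj_mx.
Proof.
rewrite /is_tsigma_morphism -[twmx qroot]/(twmx qR) !twmxE mul_row_block mul_mx_row.
pose Ga : 'M[twpoly qR]_1 := Ga_t theta; rewrite -[Ga_t theta]/Ga.
by rewrite !mul0mx mul1mx mulmx1 !mulmx0 !addr0.
Qed.

Lemma twmxeval_ext_incl (L : fieldType) (j : {rmorphism K -> L}) (qL : L -> L) z :
  twmxeval qL (map_mx (map_poly j) ext_incl_mx) z = col_mx 0 z.
Proof. by rewrite map_col_mx map_mx0 map_mx1 twmxeval_col_mx twmxeval0 twmxeval1. Qed.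

Lemma twmxeval_ext_proj (L : fieldType) (j : {rmorphism K -> L}) (qL : L -> L) x :
  twmxeval qL (map_mx (map_poly j) ext_proj_mx) x = usubmx x.
Proof.
rewrite map_row_mx map_mx0 map_mx1 -{1}[x]vsubmxK twmxeval_row_mx.
by rewrite twmxeval1 twmxeval0 addr0.
Qed.

Lemma ext_incl_proj_exact (L : closedFieldType) (j : {rmorphism K -> L}) (qL : L -> L) :
  exact_over j qL ext_incl_mx ext_proj_mx.
Proof.
split=> [z1 z2|y|x]; rewrite ?twmxeval_ext_incl ?twmxeval_ext_proj.
- by case/eq_col_mx.
- by exists (col_mx y 0); rewrite twmxeval_ext_proj col_mxKu.
- split=> [x0|[z <-]]; last by rewrite twmxeval_ext_incl col_mxKu.
  by exists (dsubmx x); rewrite twmxeval_ext_incl -x0 vsubmxK.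
Qed.

Lemma twmxeval_Ga (a : K) : twmxeval qroot (Ga_t theta) a%:M = (theta * a)%:M.
Proof. by apply/matrixP => i j; rewrite !ord1 !mxE big_ord1 !mxE twevalC !mulr1n. Qed.

Lemma tpoly0 : tpoly 0 = 0.
Proof. by apply: big1 => j _; rewrite mxE rmorph0 scale0r. Qed.

Lemma tcoord_nf_eq0 D : tcoord (nf D) = 0 <-> cobound D.
Proof.
rewrite -nf_eq0; split=> [nf0|->]; last by rewrite raddf0.
by rewrite -(tcoordK (proj1 (nfP D))) nf0 tpoly0.
Qed.

Lemma ext_coord_tact delta :
  ext_coord (der_tact psit delta) = mw_t qroot ext_mx (ext_coord delta).
Proof.
rewrite /ext_coord /der_tact /mw_t -[taumul _ _ _]/((psit : T) * _ : T).
set y := tcoord (nf (delta 'X)); rewrite -[LHS]vsubmxK -[RHS]vsubmxK; congr col_mx.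
  rewrite usubmx_twmxeval block_mxKul block_mxKur twmxeval0 addr0 !usubmx_tcoord.
  by rewrite !nf_coef0 coef0_psiM twmxeval_Ga.
by rewrite dsubmx_twmxeval block_mxKdl block_mxKdr nf_psiM -Phi1_eval dsubmx_twmxeval.
Qed.

Lemma ext_coord_presents :
  presents iota0 qroot phit psit (is_der iota0 phit psit) ext_mx ext_coord.
Proof.
split=> [d1 d2 _ _|c delta _|delta _|x|delta der_delta].
- by rewrite /ext_coord /der_add !raddfD.
- by rewrite /ext_coord /der_scale nfZ tcoordZ.
- exact: ext_coord_tact.
- exists (tder phit psit (tpoly x)); first exact: tder_is_der.
  by rewrite /ext_coord tderX nf_small ?size_tpoly // tpolyK.
- by rewrite is_inner_derE // /ext_coord tcoord_nf_eq0.
Qed.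

Lemma usubmx_ext_coord delta : usubmx (ext_coord delta) = ((delta 'X)`_0)%:M.
Proof. by rewrite usubmx_tcoord nf_coef0. Qed.

Lemma ext0_coord_presents :
  presents iota0 qroot phit psit (is_der0 iota0 phit psit) ext0_mx ext0_coord.
Proof.
have [coordD coordZ coord_tact coord_onto coord_ker] := ext_coord_presents.
split=> [d1 d2 [der1 _] [der2 _]|c delta [der_delta _]|delta [der_delta X0]|x|delta [der_delta X0]].
- by rewrite /ext0_coord coordD // raddfD.
- by rewrite /ext0_coord coordZ // linearZ.
- rewrite /ext0_coord coord_tact // /mw_t dsubmx_twmxeval block_mxKdl block_mxKdr.
  by rewrite usubmx_ext_coord X0 raddf0 twmxeval0x add0r.
- have [delta der_delta coord_delta] := coord_onto (col_mx 0 x).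
  exists delta; last by rewrite /ext0_coord coord_delta col_mxKd.
  split=> //; apply/scalar_mx1_eq0.
  by rewrite -usubmx_ext_coord coord_delta col_mxKu.
- rewrite -coord_ker // /ext0_coord; split=> [coord0|->]; last by rewrite linear0.
  by rewrite -[ext_coord delta]vsubmxK usubmx_ext_coord X0 raddf0 coord0 col_mx0.
Qed.

Lemma ext_incl_ext0_coord delta : is_der0 iota0 phit psit delta ->
  twmxeval qroot ext_incl_mx (ext0_coord delta) = ext_coord delta.
Proof.
move=> [_ X0]; rewrite twmxeval_col_mx twmxeval0 twmxeval1.
by rewrite -[RHS]vsubmxK usubmx_ext_coord X0 raddf0.
Qed.
End Construction.
End Drinfeld.
End NormalForm.

Theorem theorem7p5
  (Fq : finFieldType) (K : fieldType) (iota0 : {rmorphism Fq -> K})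
  (theta : K)
  (qroot : K -> K)
  (Hqroot1 : forall x : K, qroot x ^+ qq Fq = x)
  (Hqroot2 : forall x : K, qroot (x ^+ qq Fq) = x)
  (phit psit : {poly K})
  (Hphi : is_drinfeld theta phit) (Hpsi : is_drinfeld theta psit)
  (Hrk : (drank phit < drank psit)%N) :
  exists (d0 d : nat)
         (Phi0 : 'M[{poly K}]_d0) (Phi : 'M[{poly K}]_d)
         (f : 'M[{poly K}]_(d, d0)) (g : 'M[{poly K}]_(1, d))
         (pi0 : ({poly Fq} -> {poly K}) -> 'cV[K]_d0)
         (pi : ({poly Fq} -> {poly K}) -> 'cV[K]_d),
    [/\ is_tsigma_module theta Phi0 /\ is_tsigma_module theta Phi,
        is_tsigma_morphism qroot Phi0 Phi f /\
        is_tsigma_morphism qroot Phi (Ga_t theta) g,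
        (forall (L : closedFieldType) (j : {rmorphism K -> L})
                (qrootL : L -> L),
            (forall y : L, qrootL y ^+ qq Fq = y) ->
            exact_over j qrootL f g),
        presents iota0 qroot phit psit (is_der0 iota0 phit psit) Phi0 pi0 /\
        presents iota0 qroot phit psit (is_der iota0 phit psit) Phi pi &
        forall delta, is_der0 iota0 phit psit delta ->
          twmxeval qroot f (pi0 delta) = pi delta].
Proof.
have [Phi1 Phi1_eval Phi1_const] := action_mx_ex iota0 Hqroot1 Hqroot2 Hrk Hphi.
exists _, _, (ext0_mx Phi1), (ext_mx theta Phi1),
  (ext_incl_mx psit), (ext_proj_mx psit), (ext0_coord iota0 Hqroot1 Hrk), (ext_coord iota0 Hqroot1 Hrk).
split.
- exact: (conj (ext0_mx_tsigma Phi1_const) (ext_mx_tsigma Phi1_const)).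
- split; [exact: (ext_incl_mx_morphism iota0 Hqroot1 Hqroot2) | exact: (ext_proj_mx_morphism iota0 Hqroot1 Hqroot2)].
- by move=> L j qL _; exact: ext_incl_proj_exact.
- split; [apply: (ext0_coord_presents Hqroot2 Hphi Hpsi Phi1_eval) | apply: (ext_coord_presents Hqroot2 Hphi Hpsi Phi1_eval)].
- exact: ext_incl_ext0_coord Hphi Hpsi.
Qed.
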